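(* Let $n$ be a positive even integer and $m = n^2+1$. Let $Q_n = (a_{i,j})_{1\le i,j\le n}$ be the $n\times n$ matrix with entries in $\mathbb{Z}/m\mathbb{Z}$ given by $a_{i,j} = j + (i-1)n$, and let $\rho(Q_n)$ be the $n\times n$ matrix whose $(i,j)$ entry is $a_{j,n-i+1}$. Writing $\left(\frac{A}{m}\right)$ for the matrix obtained by applying the Jacobi symbol $\left(\frac{\cdot}{m}\right)$ to each entry of $A$, we have $$\left(\frac{\rho(Q_n)}{m}\right) = \begin{cases} \left(\frac{Q_n}{m}\right) & \text{if } n\equiv 0 \pmod 4,\\ -\left(\frac{Q_n}{m}\right) & \text{if } n\equiv 2\pmod 4.\end{cases}$$
   Context: For odd $m>2$ with prime factorization $m=\prod_{k=1}^K p_k$ (primes not necessarily distinct), the Jacobi symbol is $\left(\frac{a}{m}\right)=\prod_{k=1}^K \left(\frac{a}{p_k}\right)$, where $\left(\frac{a}{p}\right)$ is the Legendre symbol; it is well-defined on $\mathbb{Z}/m\mathbb{Z}$. *)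

From mathcomp Require Import all_boot all_order all_algebra.
Set Implicit Arguments. Unset Strict Implicit. Unset Printing Implicit Defensive.
Import GRing.Theory Num.Theory.
Local Open Scope ring_scope.

Definition legendre (a p : nat) : int :=
  if (p %| a)%N then 0
  else if [exists x : 'I_p, ((x * x) %% p == a %% p)%N] then 1 else -1.

Definition jacobi (a m : nat) : int :=
  \prod_(p <- primes m) legendre a p ^+ logn p m.

(* Q_n, 0-indexed: entry (i,j) is a_{i+1,j+1} = (j+1) + i*n
   (these are the canonical representatives in Z/(n^2+1)Z). *)
Definition Qmat (n : nat) : 'M[nat]_n := \matrix_(i < n, j < n) (j.+1 + i * n)%N.

(* rho(A)_{i,j} = a_{j, n-i+1}  (1-indexed), i.e. A j (rev_ord i) 0-indexed. *)
Definition rho (T : Type) (n : nat) (A : 'M[T]_n) : 'M[T]_n :=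
  \matrix_(i < n, j < n) A j (rev_ord i).

Definition jacobi_mx (n m : nat) (A : 'M[nat]_n) : 'M[int]_n :=
  map_mx (fun a => jacobi a m) A.

From mathcomp Require Import all_boot all_order all_algebra all_solvable all_field.
From mathcomp Require Import zify.
Set Implicit Arguments.
Unset Strict Implicit.
Unset Printing Implicit Defensive.
Import GRing.Theory Num.Theory.
Local Open Scope ring_scope.

(* The (i,j) entry of rho(Q_n) is (n-i+1) + (j-1)n, which is congruent to
   n a_{i,j} = nj + (i-1)n^2 modulo m = n^2+1; so by multiplicativity of the
   Jacobi symbol it suffices to show (n/m) = (-1)^(n/2). Every prime p | m has
   n^2 = -1 mod p, hence p = 1 mod 4 and, by Euler's criterion,
   (n/p) = n^((p-1)/2) = (-1)^((p-1)/4). The sign x |-> (-1)^((x-1)/4) is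
   multiplicative on numbers x = 1 mod 4, so (n/m) = (-1)^((m-1)/4), and
   (m-1)/4 = (n/2)^2. *)

Section EulerCriterion.

Variable F : finFieldType.
Hypothesis F_odd : odd #|F|.
Local Notation h := #|F|./2.

Lemma card_finField_pred : #|F|.-1 = h.*2.
Proof. by rewrite -{1}(odd_double_half #|F|) F_odd. Qed.

Lemma finField_half_gt0 : (0 < h)%N.
Proof.
by have := finNzRing_gt1 F; rewrite -(odd_double_half #|F|) F_odd; case: (h).
Qed.

Lemma expf_card_pred (x : F) : x != 0 -> x ^+ #|F|.-1 = 1.
Proof.
move=> x_neq0; apply: (mulfI x_neq0); rewrite -exprS mulr1.
by rewrite prednK ?expf_card // -(odd_double_half #|F|) F_odd.
Qed.

Lemma finField_prim_root : exists z : F, #|F|.-1.-primitive_root z.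
Proof.
have card_gt0 : (0 < #|F|.-1)%N.
  by rewrite card_finField_pred double_gt0 finField_half_gt0.
suff /hasP[z _ z_prim] : has #|F|.-1.-primitive_root (enum (predC1 (0 : F))).
  by exists z.
apply: has_prim_root; rewrite ?enum_uniq -?cardE ?cardC1 //.
by apply/allP => x; rewrite mem_enum unity_rootE => /expf_card_pred ->.
Qed.

Lemma euler_criterion (a : F) : a != 0 -> (exists y, y * y = a) <-> a ^+ h = 1.
Proof.
move=> a_neq0; split=> [[y sqr_y]|a_h].
  have y_neq0 : y != 0 by apply: contraNneq a_neq0 => y0; rewrite -sqr_y y0 mul0r.
  by rewrite -sqr_y -expr2 -exprM mul2n -card_finField_pred expf_card_pred.
have [z z_prim] := finField_prim_root.
have [[i _] /= a_zi] := prim_rootP z_prim (expf_card_pred a_neq0).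
move: a_h; rewrite a_zi -exprM => /eqP; rewrite -(prim_order_dvd z_prim).
rewrite card_finField_pred -muln2 mulnC dvdn_pmul2r ?finField_half_gt0 //.
by case/dvdnP=> k ->; exists (z ^+ k); rewrite -exprD addnn -muln2.
Qed.

Lemma expf_half_eqN1 (a : F) : a != 0 -> a ^+ h != 1 -> a ^+ h = -1.
Proof.
move=> a_neq0 a_h_neq1; apply/eqP.
have : (a ^+ h) ^+ 2 == 1 by rewrite -exprM muln2 -card_finField_pred expf_card_pred.
by rewrite sqrf_eq1 (negPf a_h_neq1).
Qed.

End EulerCriterion.

Lemma intr_sign0_inj (R : nzRingType) (x y : int) : (2%:R : R) != 0 ->
  x \in [:: 0; 1; -1] -> y \in [:: 0; 1; -1] -> x%:~R = y%:~R :> R -> x = y.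
Proof.
move=> two_neq0; have one_neqN1 : (1 : R) != -1 by rewrite -addr_eq0.
have N1_neq0 : (-1 : R) != 0 by rewrite oppr_eq0 oner_eq0.
rewrite !inE => /or3P[]/eqP-> /or3P[]/eqP-> //=; rewrite ?rmorph0 ?rmorph1 ?rmorphN1.
all: move/eqP; rewrite ?(eq_sym (-1)) ?(eq_sym 0) ?oner_eq0 ?(negPf N1_neq0).
all: by rewrite ?(negPf one_neqN1).
Qed.

Section Legendre.

Variable p : nat.
Hypotheses (p_pr : prime p) (p_odd : odd p).
Local Notation F := 'F_p.

Lemma Fp_nat_eq a b : ((a%:R : F) == b%:R) = (a == b %[mod p])%N.
Proof. by rewrite -val_eqE /= !val_Fp_nat. Qed.

Lemma Fp_nat_eq0 a : ((a%:R : F) == 0) = (p %| a)%N.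
Proof. by rewrite -[0]/(0%:R : F) Fp_nat_eq mod0n. Qed.

Lemma Fp_two_neq0 : (2%:R : F) != 0.
Proof. by rewrite Fp_nat_eq0 dvdn_prime2 //; apply: contraTneq p_odd => ->. Qed.

Lemma odd_card_Fp : odd #|F|.
Proof. by rewrite card_Fp. Qed.

Lemma Fp_half_gt0 : (0 < p./2)%N.
Proof. by have := finField_half_gt0 odd_card_Fp; rewrite card_Fp. Qed.

Lemma sqr_FpP a :
  reflect (exists y : F, y * y = a%:R) [exists x : 'I_p, x * x %% p == a %% p]%N.
Proof.
apply: (iffP existsP) => [[x /eqP sqr_x]|[y sqr_y]].
  by exists (val x)%:R; apply/eqP; rewrite -natrM Fp_nat_eq sqr_x.
have y_lt_p : (val y < p)%N by apply: leq_trans (ltn_ord y) _; rewrite Fp_cast.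
exists (Ordinal y_lt_p); rewrite -Fp_nat_eq natrM /=.
by rewrite natr_Zp sqr_y.
Qed.

Lemma legendre_Fp a : (legendre a p)%:~R = (a%:R : F) ^+ p./2.
Proof.
rewrite /legendre -Fp_nat_eq0; have [->|a_neq0] := eqVneq.
  by rewrite expr0n eqn0Ngt Fp_half_gt0.
have := euler_criterion odd_card_Fp a_neq0; rewrite card_Fp // => euler.
case: sqr_FpP => [/euler -> //| not_sqr].
have := expf_half_eqN1 odd_card_Fp a_neq0; rewrite card_Fp // rmorphN1 => -> //.
by apply: contra_not_neq not_sqr => /euler.
Qed.

Lemma mem_legendre a : legendre a p \in [:: 0; 1; -1].
Proof. by rewrite /legendre; do 2?case: ifP. Qed.

Lemma legendre_inj x y : x \in [:: 0; 1; -1] -> y \in [:: 0; 1; -1] ->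
  x%:~R = y%:~R :> F -> x = y.
Proof. exact: intr_sign0_inj Fp_two_neq0. Qed.

Lemma legendreM a b : legendre (a * b) p = legendre a p * legendre b p.
Proof.
apply: legendre_inj; rewrite ?mem_legendre //.
  by move: (mem_legendre a) (mem_legendre b); rewrite !inE => /or3P[]/eqP-> /or3P[]/eqP->.
by rewrite intrM !legendre_Fp natrM exprMn.
Qed.

Lemma legendre_mod a b : a = b %[mod p] -> legendre a p = legendre b p.
Proof. by rewrite /legendre /dvdn => ->. Qed.

Section SquareRootOfMinusOne.

Variable n : nat.
Hypothesis p_dvd : (p %| n ^ 2 + 1)%N.

Lemma Fp_sqrN1 : (n%:R : F) ^+ 2 = -1.
Proof. by apply/eqP; rewrite -addr_eq0 -natrX -(natrD _ _ 1) Fp_nat_eq0. Qed.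

Lemma prime_dvd_sqrS_half_even : ~~ odd p./2.
Proof.
have n_neq0 : (n%:R : F) != 0.
  by apply: contra_eq_neq Fp_sqrN1 => ->; rewrite expr0n eq_sym oppr_eq0 oner_eq0.
have := expf_card_pred odd_card_Fp n_neq0.
rewrite (card_finField_pred odd_card_Fp) card_Fp // -mul2n exprM Fp_sqrN1 -signr_odd.
case: odd => //= /eqP.
by rewrite expr1 eq_sym -addr_eq0 (negPf Fp_two_neq0).
Qed.

Lemma prime_dvd_sqrS_mod4 : (p %% 4 = 1)%N.
Proof.
by rewrite -(odd_double_half p) -(even_halfK prime_dvd_sqrS_half_even) p_odd; lia.
Qed.

Lemma legendre_sqrS : legendre n p = (-1) ^+ (p %/ 4).
Proof.
have -> : (p %/ 4 = p./2./2)%N.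
  by rewrite -{1}(odd_double_half p) -(even_halfK prime_dvd_sqrS_half_even) p_odd; lia.
apply: legendre_inj; rewrite ?mem_legendre //.
  by rewrite -signr_odd; case: odd.
rewrite legendre_Fp -{1}(even_halfK prime_dvd_sqrS_half_even) -mul2n exprM Fp_sqrN1.
by rewrite rmorphXn rmorphN1.
Qed.

End SquareRootOfMinusOne.

End Legendre.

Lemma jacobiM a b m : odd m -> jacobi (a * b) m = jacobi a m * jacobi b m.
Proof.
move=> m_odd; rewrite /jacobi -big_split /=; apply: eq_big_seq => p.
rewrite mem_primes => /and3P[p_pr _ p_dvd_m].
by rewrite legendreM ?exprMn // (dvdn_odd p_dvd_m m_odd).
Qed.

Lemma jacobi_mod a b m : a = b %[mod m] -> jacobi a m = jacobi b m.
Proof.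
move=> eq_ab; apply: eq_big_seq => p; rewrite mem_primes => /and3P[_ _ p_dvd_m].
by rewrite (@legendre_mod p a b) // -(modn_dvdm a p_dvd_m) eq_ab modn_dvdm.
Qed.

(* For x = 1 mod 4 this is (-1)^((x-1)/4). *)
Definition quart_sign (x : nat) : int := (-1) ^+ (x %/ 4).

Lemma quart_signM x y : (x %% 4 = 1)%N -> (y %% 4 = 1)%N ->
  quart_sign (x * y) = quart_sign x * quart_sign y.
Proof.
move=> x_mod4 y_mod4; rewrite /quart_sign -exprD -signr_odd -[RHS]signr_odd.
rewrite (divn_eq x 4) (divn_eq y 4) x_mod4 y_mod4.
set a := (x %/ 4)%N; set b := (y %/ 4)%N.
have -> : ((a * 4 + 1) * (b * 4 + 1) = (a * b * 4 + a + b) * 4 + 1)%N by nia.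
by rewrite !divnMDl // !divn_small // !addn0 !oddD oddM andbF.
Qed.

Lemma quart_signX x e : (x %% 4 = 1)%N -> quart_sign (x ^ e) = quart_sign x ^+ e.
Proof.
move=> x_mod4; elim: e => [//|e IHe].
by rewrite expnS exprS quart_signM ?IHe // -modnXm x_mod4 exp1n.
Qed.

Lemma quart_sign_prod (I : eqType) (r : seq I) (F : I -> nat) :
  {in r, forall i, F i %% 4 = 1}%N ->
  quart_sign (\prod_(i <- r) F i)%N = \prod_(i <- r) quart_sign (F i).
Proof.
move=> F_mod4; rewrite big_seq [RHS]big_seq.
pose K x s := (x %% 4 = 1)%N /\ quart_sign x = s.
suff [] : K (\prod_(i <- r | i \in r) F i)%N (\prod_(i <- r | i \in r) quart_sign (F i)).
  by [].
apply: big_ind2 => [//|x1 s1 x2 s2 [x1_mod4 <-] [x2_mod4 <-]|i /F_mod4 //].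
by split; [rewrite -modnMm x1_mod4 x2_mod4 | rewrite quart_signM].
Qed.

Lemma prod_primes_logn n : (0 < n)%N -> (\prod_(p <- primes n) p ^ logn p n)%N = n.
Proof. by move=> n_gt0; rewrite [RHS](prod_prime_decomp n_gt0) prime_decompE big_map. Qed.

Lemma jacobi_sqrS n : ~~ odd n -> jacobi n (n ^ 2).+1 = (-1) ^+ n./2.
Proof.
move=> n_even; set m := (n ^ 2).+1.
have m_odd : odd m by rewrite /= oddX (negPf n_even).
have prime_factor p : p \in primes m -> (p %% 4 = 1)%N /\ legendre n p = quart_sign p.
  rewrite mem_primes => /and3P[p_pr _ p_dvd_m].
  have p_odd := dvdn_odd p_dvd_m m_odd.
  have p_dvd : (p %| n ^ 2 + 1)%N by rewrite addn1.
  by rewrite (prime_dvd_sqrS_mod4 p_pr p_odd p_dvd) (legendre_sqrS p_pr p_odd p_dvd).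
have -> : jacobi n m = quart_sign m.
  rewrite /jacobi -[X in quart_sign X](prod_primes_logn (ltn0Sn _ : (0 < m)%N)).
  rewrite quart_sign_prod; last first.
    by move=> p /prime_factor[p_mod4 _]; rewrite -modnXm p_mod4 exp1n.
  by apply: eq_big_seq => p /prime_factor[p_mod4 ->]; rewrite quart_signX.
rewrite /quart_sign.
have -> : (m %/ 4 = n./2 * n./2)%N by rewrite /m -{1}(even_halfK n_even); nia.
by rewrite -signr_odd oddM andbb signr_odd.
Qed.

Lemma rho_Qmat_mod n (i j : 'I_n) :
  (rho (Qmat n) i j = n * Qmat n i j %[mod (n ^ 2).+1])%N.
Proof.
rewrite !mxE /=.
have -> : (n * (j.+1 + i * n) = i * (n ^ 2).+1 + ((n - i.+1).+1 + j * n))%N.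
  by have := ltn_ord i; nia.
by rewrite modnMDl.
Qed.

Theorem theorem3 (n : nat) (n_gt0 : (0 < n)%N) (n_even : ~~ odd n) :
  jacobi_mx (n ^ 2).+1 (rho (Qmat n)) =
  (if (4 %| n)%N then jacobi_mx (n ^ 2).+1 (Qmat n)
   else - jacobi_mx (n ^ 2).+1 (Qmat n)).
Proof.
have m_odd : odd (n ^ 2).+1 by rewrite /= oddX (negPf n_even).
have -> : (4 %| n)%N = ~~ odd n./2.
  by rewrite -{1}(even_halfK n_even) -muln2 -[4%N]/(2 * 2)%N dvdn_pmul2r // dvdn2.
apply/matrixP => i j; rewrite [LHS]mxE (jacobi_mod (rho_Qmat_mod i j)).
rewrite jacobiM // jacobi_sqrS // -signr_odd.
by case: odd; rewrite !mxE ?mulN1r ?mul1r.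
Qed.
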